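(* Let $\alpha\in(0,1]$, $\beta=1-\alpha$, and let $f:[a,b]\to\mathbb{R}$ ($a<b$) be continuous on $[a,b]$ and $\alpha$-differentiable on $(a,b)$. Then there exists $c\in(a,b)$ such that $$D^\alpha f(c)=\beta f(c)+\alpha\,\frac{f(b)-f(a)}{b-a}.$$
   Context: For a real function $f$ defined on an open interval $(a,b)$, a number $\alpha\in[0,1]$ and $\beta=1-\alpha$, the deformable derivative ($\alpha$-derivative) of $f$ at $t\in(a,b)$ is $$D^\alpha f(t)=\lim_{\epsilon\to0}\frac{(1+\epsilon\beta)f(t+\epsilon\alpha)-f(t)}{\epsilon},$$ whenever this limit exists; in that case $f$ is called $\alpha$-differentiable at $t$. $f$ is $\alpha$-differentiable on $(a,b)$ if it is so at every point of $(a,b)$. *)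

From Stdlib Require Import Reals.
Open Scope R_scope.

Definition alpha_deriv_at (alpha : R) (f : R -> R) (t L : R) : Prop :=
  forall e : R, 0 < e -> exists d : R, 0 < d /\
    forall h : R, h <> 0 -> Rabs h < d ->
      Rabs (((1 + h * (1 - alpha)) * f (t + h * alpha) - f t) / h - L) < e.

Definition alpha_differentiable_at (alpha : R) (f : R -> R) (t : R) : Prop :=
  exists L : R, alpha_deriv_at alpha f t L.

Definition continuous_on_closed (f : R -> R) (a b : R) : Prop :=
  forall x : R, a <= x <= b ->
    forall e : R, 0 < e -> exists d : R, 0 < d /\
      forall y : R, a <= y <= b -> Rabs (y - x) < d -> Rabs (f y - f x) < e.

(* For 0 < alpha, substituting k = h alpha in the alpha-difference quotient
   shows that an alpha-derivative L of f at t forces f to be differentiable at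
   t with L = (1 - alpha) f t + alpha f' t.  The theorem is then Lagrange's
   mean value theorem for f, read through this identity at the mean value
   point. *)

From Stdlib Require Import Reals Lra.
From Coquelicot Require Import Coquelicot.
Open Scope R_scope.

Definition alpha_quotient (alpha : R) (f : R -> R) (t h : R) : R :=
  ((1 + h * (1 - alpha)) * f (t + h * alpha) - f t) / h.

Lemma alpha_quotient_decomp (alpha : R) (f : R -> R) (t L h : R) :
  alpha <> 0 -> h <> 0 -> 1 + h * (1 - alpha) <> 0 ->
  (f (t + h * alpha) - f t) / (h * alpha) - (L - (1 - alpha) * f t) / alpha
  = ((alpha_quotient alpha f t h - L) - h * (1 - alpha) * (L - (1 - alpha) * f t))
    / (alpha * (1 + h * (1 - alpha))).
Proof. intros; unfold alpha_quotient; field; auto. Qed.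

Lemma derivable_pt_lim_of_alpha_deriv (alpha : R) (f : R -> R) (t L : R) :
  0 < alpha <= 1 -> alpha_deriv_at alpha f t L ->
  derivable_pt_lim f t ((L - (1 - alpha) * f t) / alpha).
Proof.
  intros [alpha_gt0 alpha_le1] HL eps eps_gt0.
  set (C := Rabs (L - (1 - alpha) * f t)).
  assert (C_ge0 : 0 <= C) by apply Rabs_pos.
  destruct (HL (eps * alpha / 4)) as [d [d_gt0 Hq]]; [nra|].
  set (dh := Rmin d (Rmin (1 / 2) (eps * alpha / (4 * (C + 1))))).
  assert (dh_gt0 : 0 < dh).
  { apply Rmin_glb_lt; [lra|apply Rmin_glb_lt; [lra|]].
    apply Rdiv_lt_0_compat; nra. }
  assert (dk_gt0 : 0 < alpha * dh) by nra.
  exists (mkposreal _ dk_gt0); intros k k_neq0 Hk; simpl in Hk.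
  set (h := k / alpha).
  assert (k_eq : k = h * alpha) by (unfold h; field; lra).
  assert (h_lt : Rabs h < dh).
  { unfold h; rewrite Rabs_div, (Rabs_pos_eq alpha) by lra.
    apply Rlt_div_l; lra. }
  assert (h_lt_d : Rabs h < d) by (eapply Rlt_le_trans; [exact h_lt|apply Rmin_l]).
  assert (h_lt_half : Rabs h < 1 / 2).
  { eapply Rlt_le_trans; [exact h_lt|].
    eapply Rle_trans; [apply Rmin_r|apply Rmin_l]. }
  assert (h_small : Rabs h * (C + 1) < eps * alpha / 4).
  { apply Rlt_div_r; [lra|].
    replace (eps * alpha / 4 / (C + 1)) with (eps * alpha / (4 * (C + 1)))
      by (field; lra).
    eapply Rlt_le_trans; [exact h_lt|].
    eapply Rle_trans; [apply Rmin_r|apply Rmin_r]. }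
  assert (h_neq0 : h <> 0) by (intro E; apply k_neq0; rewrite k_eq, E; ring).
  destruct (Rabs_def2 _ _ h_lt_half) as [h_lo h_hi].
  assert (den_gt : alpha / 2 < alpha * (1 + h * (1 - alpha))) by nra.
  rewrite k_eq, alpha_quotient_decomp by nra.
  rewrite Rabs_div, (Rabs_pos_eq (alpha * _)) by nra.
  apply Rlt_div_l; [nra|].
  eapply Rle_lt_trans; [apply Rabs_triang|].
  rewrite Rabs_Ropp, !Rabs_mult, (Rabs_pos_eq (1 - alpha)) by lra; fold C.
  assert (drift_le : Rabs h * (1 - alpha) * C <= Rabs h * (C + 1)).
  { rewrite Rmult_assoc; apply Rmult_le_compat_l; [apply Rabs_pos|nra]. }
  assert (eps * alpha / 2 < eps * (alpha * (1 + h * (1 - alpha)))) by nra.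
  pose proof (Hq h h_neq0 h_lt_d); unfold alpha_quotient; lra.
Qed.

(* Stdlib's MVT asks for two-sided continuity at a and b; composing with the
   clamp extends f continuously by constants outside [a, b]. *)
Definition clamp (a b x : R) : R := Rmax a (Rmin b x).

Lemma clamp_in (a b x : R) : a <= b -> a <= clamp a b x <= b.
Proof. intros; unfold clamp, Rmax, Rmin; repeat destruct Rle_dec; lra. Qed.

Lemma clamp_id (a b x : R) : a <= x <= b -> clamp a b x = x.
Proof. intros; unfold clamp, Rmax, Rmin; repeat destruct Rle_dec; lra. Qed.

Lemma clamp_dist (a b x y : R) :
  a <= b -> Rabs (clamp a b y - clamp a b x) <= Rabs (y - x).
Proof.
  intros; unfold clamp, Rmax, Rmin, Rabs;
    repeat destruct Rle_dec; repeat destruct Rcase_abs; lra.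
Qed.

Lemma continuity_pt_clamp (f : R -> R) (a b x : R) :
  a <= b -> continuous_on_closed f a b ->
  continuity_pt (fun y => f (clamp a b y)) x.
Proof.
  intros ab Hf eps eps_gt0.
  destruct (Hf (clamp a b x) (clamp_in a b x ab) eps eps_gt0) as [d [d_gt0 Hd]].
  exists d; split; [exact d_gt0|]; intros y [_ Hy]; simpl in *; unfold R_dist in *.
  apply Hd; [now apply clamp_in|].
  eapply Rle_lt_trans; [apply clamp_dist|]; assumption.
Qed.

Lemma is_derive_clamp (f : R -> R) (a b t l : R) :
  a < t < b -> derivable_pt_lim f t l ->
  is_derive (fun y => f (clamp a b y)) t l.
Proof.
  intros Ht Hf.
  apply (is_derive_ext_loc f); [|now apply is_derive_Reals].
  apply (locally_interval _ t a b); simpl; try lra.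
  intros y ay yb; rewrite clamp_id; simpl in *; lra.
Qed.

Theorem theorem3p2 (alpha a b : R) (f : R -> R) :
  0 < alpha <= 1 -> a < b ->
  continuous_on_closed f a b ->
  (forall t : R, a < t < b -> alpha_differentiable_at alpha f t) ->
  exists c : R, a < c < b /\
    alpha_deriv_at alpha f c
      ((1 - alpha) * f c + alpha * ((f b - f a) / (b - a))).
Proof.
  intros Halpha ab Hcont Hdiff.
  set (g := fun y => f (clamp a b y)).
  assert (g_derive : forall c L, a < c < b -> alpha_deriv_at alpha f c L ->
            is_derive g c ((L - (1 - alpha) * f c) / alpha)).
  { intros c L Hc HL; apply is_derive_clamp, derivable_pt_lim_of_alpha_deriv; auto. }
  assert (g_derivable : forall c, a < c < b -> derivable_pt g c).
  (* [Derive] supplies the witness of the Set-valued [derivable_pt]. *)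
  { intros c Hc; exists (Derive g c); apply is_derive_Reals, Derive_correct.
    destruct (Hdiff c Hc) as [L HL]; eexists; exact (g_derive c L Hc HL). }
  destruct (MVT g id a b g_derivable (fun c _ => derivable_pt_id c) ab
              (fun c _ => continuity_pt_clamp f a b c (Rlt_le _ _ ab) Hcont)
              (fun c _ => derivable_continuous_pt _ _ (derivable_pt_id c)))
    as [c [Hc Hmvt]].
  exists c; split; [exact Hc|].
  destruct (Hdiff c Hc) as [L HL].
  replace (derive_pt g c (g_derivable c Hc)) with ((L - (1 - alpha) * f c) / alpha)
    in Hmvt by (symmetry; apply derive_pt_eq_0, is_derive_Reals, g_derive; assumption).
  rewrite derive_pt_id in Hmvt; unfold g, id in Hmvt.
  rewrite !clamp_id in Hmvt by lra.
  replace ((1 - alpha) * f c + alpha * ((f b - f a) / (b - a))) with L; [exact HL|].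
  rewrite <- (Rmult_1_r (f b - f a)), <- Hmvt; field; split; lra.
Qed.
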